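(* Consider the $l$-th cycle of RPF-SFISTA with $\mu=\mu_{l-1}$, and let $\gamma_j(x):=\phi(y_j)+2[\ell_f(y_j;\tilde x_{j-1})-f(y_j)]+\langle s_j,x-y_j\rangle+\frac{\mu}{4}\|x-y_j\|^2$. Then for every iteration index $j\ge1$ generated in this cycle and every $x\in\mathbb R^n$, $$A_{j-1}\gamma_j(y_{j-1})+a_{j-1}\gamma_j(x)+\frac{\tau_{j-1}}{2}\|x_{j-1}-x\|^2-\frac{\tau_j}{2}\|x_j-x\|^2\ \ge\ A_j\phi(y_j)+\frac{\chi A_jL_j}{2}\|y_j-\tilde x_{j-1}\|^2.$$
   Context: Setup. Let $f:\mathbb R^n\to\mathbb R$ be convex and differentiable with $\|\nabla f(z')-\nabla f(z)\|\le\bar L\|z'-z\|$ for all $z,z'\in\mathbb R^n$ (some $\bar L\ge0$). Let $h:\mathbb R^n\to(-\infty,\infty]$ be proper, lower semicontinuous and convex with domain $\mathcal H$. Let $\phi:=f+h$ be $\bar\mu$-strongly convex for some $\bar\mu>0$. Write $\ell_f(u;x):=f(x)+\langle\nabla f(x),u-x\rangle$. RPF-SFISTA. Parameters $\chi\in(0,1)$, $\beta>1$; inputs $\mu_0>0$, $\bar M_0>0$, $z_0\in\mathcal H$, $\hat\epsilon>0$. The method runs in cycles $l=1,2,\dots$. At the start of cycle $l$: choose $\underline M_l\in[\max\{\bar M_{l-1}/4,\bar M_0\},\bar M_{l-1}]$ (so $\underline M_1=\bar M_0$), set $\mu:=\mu_{l-1}$, $x_0:=z_{l-1}$, $\xi_0:=y_0:=x_0$,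 $A_0:=0$, $\tau_0:=1$, $L_0:=\underline M_l$. Then for $j=1,2,\dots$: (i) set $L_j:=L_{j-1}$; (ii) compute $a_{j-1}=\frac{\tau_{j-1}+\sqrt{\tau_{j-1}^2+4\tau_{j-1}A_{j-1}L_j}}{2L_j}$, $\tilde x_{j-1}=\frac{A_{j-1}y_{j-1}+a_{j-1}x_{j-1}}{A_{j-1}+a_{j-1}}$, $y_j=\arg\min_{u}\{\ell_f(u;\tilde x_{j-1})+h(u)+\frac{L_j}{2}\|u-\tilde x_{j-1}\|^2\}$; if $f(y_j)\le\ell_f(y_j;\tilde x_{j-1})+\frac{(1-\chi)L_j}{4}\|y_j-\tilde x_{j-1}\|^2$ go to (iii), otherwise replace $L_j$ by $\beta L_j$ and repeat (ii); (iii) set $\xi_j:=y_j$ if $\phi(y_j)\le\phi(\xi_{j-1})$ and $\xi_j:=\xi_{j-1}$ otherwise; $A_j:=A_{j-1}+a_{j-1}$; $\tau_j:=\tau_{j-1}+a_{j-1}\mu/2$; $s_j:=L_j(\tilde x_{j-1}-y_j)$; $x_j:=\tau_j^{-1}[\mu a_{j-1}y_j/2+\tau_{j-1}x_{j-1}-a_{j-1}s_j]$; $v_j:=\nabla f(y_j)-\nabla f(\tilde x_{j-1})+s_j$; (iv) if $\|\xi_j-x_0\|^2<\chi A_jL_j\|y_j-\tilde x_{j-1}\|^2$, the cycle ends with a restart: set $z_l:=\xi_j$, $\bar M_l:=L_j$, $\mu_l:=\mu/2$ and start cycle $l+1$; (v) otherwise, if $\|v_j\|\le\hat\epsilon$,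 stop and output $(y,v,\xi,L):=(y_j,v_j,\xi_j,L_j)$; else go to iteration $j+1$. In these formulas $L_j$, $a_{j-1}$, $\tilde x_{j-1}$, $y_j$ denote the final (accepted) values after the line search in (ii). *)

(* Vectors of R^n are row vectors 'rV[R]_n
   over R : realType; the Euclidean inner product and norm are defined below
   (the library's norm on matrices is the sup norm, not the Euclidean one). *)
From HB Require Import structures.
From mathcomp Require Import all_boot all_order all_algebra.
From mathcomp Require Import all_classical all_reals.
From mathcomp Require Import topology normedtype derive.
Set Implicit Arguments. Unset Strict Implicit. Unset Printing Implicit Defensive.
Import Order.TTheory GRing.Theory Num.Theory.
Import numFieldNormedType.Exports.
Local Open Scope classical_set_scope.
Local Open Scope ring_scope.

Section RPF.
Variables (R : realType) (n : nat).
Notation V := 'rV[R]_n.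

Definition dot (u w : V) : R := \sum_(i < n) u ord0 i * w ord0 i.
Definition sqn (u : V) : R := dot u u.
Definition enorm (u : V) : R := Num.sqrt (sqn u).

Definition is_gradient (f : V -> R) (g : V -> V) : Prop :=
  forall z, differentiable f z /\ forall d : V, ('d f z) d = dot (g z) d.

Definition convex_fun (f : V -> R) : Prop :=
  forall (u w : V) (t : R), 0 <= t <= 1 ->
    f (t *: u + (1 - t) *: w) <= t * f u + (1 - t) * f w.

(* An extended-valued function h : R^n -> (-oo, +oo] is encoded by a real-valued
   function h together with its (effective) domain H: h is +oo outside H and
   the real values of h outside H are irrelevant (never used). *)
Definition proper_lsc_convex (h : V -> R) (H : set V) : Prop :=
  [/\ (exists z, H z),
      (forall (u w : V) (t : R), H u -> H w -> 0 <= t <= 1 ->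
          H (t *: u + (1 - t) *: w) /\
          h (t *: u + (1 - t) *: w) <= t * h u + (1 - t) * h w)
    & (forall c : R, closed [set z | H z /\ h z <= c])].

Definition strongly_convex_ext (phi : V -> R) (H : set V) (mu : R) : Prop :=
  forall (u w : V) (t : R), H u -> H w -> 0 <= t <= 1 ->
    phi (t *: u + (1 - t) *: w) <=
      t * phi u + (1 - t) * phi w - mu / 2 * (t * (1 - t)) * sqn (u - w).

Definition linf (f : V -> R) (g : V -> V) (u x : V) : R := f x + dot (g x) (u - x).

(* step (ii) quantities, as functions of the trial constant Lc *)
Definition a_of (Aprev tprev Lc : R) : R :=
  (tprev + Num.sqrt (tprev ^+ 2 + 4 * tprev * Aprev * Lc)) / (2 * Lc).
Definition xt_of (Aprev ac : R) (yprev xprev : V) : V :=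
  (Aprev + ac)^-1 *: (Aprev *: yprev + ac *: xprev).

Definition is_prox (f : V -> R) (g : V -> V) (h : V -> R) (H : set V)
    (xt : V) (Lc : R) (y : V) : Prop :=
  H y /\ forall u, H u ->
    linf f g y xt + h y + Lc / 2 * sqn (y - xt) <=
    linf f g u xt + h u + Lc / 2 * sqn (u - xt).

Definition accepted (f : V -> R) (g : V -> V) (chi : R) (xt : V) (Lc : R) (y : V) : Prop :=
  f y <= linf f g y xt + (1 - chi) * Lc / 4 * sqn (y - xt).

Definition gammaj (f : V -> R) (g : V -> V) (h : V -> R) (mu : R)
    (yj xtj sj : V) (u : V) : R :=
  (f yj + h yj) + 2 * (linf f g yj xtj - f yj) + dot sj (u - yj)
  + mu / 4 * sqn (u - yj).

End RPF.

(* One iteration of the line search is an accelerated proximal-gradient step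
   whose coefficients satisfy L a^2 = tau (A + a).  With this relation and the
   update formulas for xt, s and x, the quadratic part of the inequality is,
   coordinate by coordinate, the sum of squares
     A mu/4 (yp - y)^2 + a mu/4 (x' - y)^2 + tau/2 (x' - x + a s / tau)^2
   plus (A + a) L/2 |y - xt|^2.  The linear-in-phi part is handled by the
   acceptance test, which bounds 2 (l_f(y; xt) - f(y)) below by
   -(1 - chi) L/2 |y - xt|^2; what is left of (A + a) L/2 |y - xt|^2 is the
   chi-term of the claim.  No convexity or smoothness is needed: besides the
   relations of iteration j, only the positivity of A, tau and L, propagated
   from the start of the cycle, is used. *)
From HB Require Import structures.
From mathcomp Require Import all_boot all_order all_algebra.
From mathcomp Require Import all_classical all_reals.
From mathcomp Require Import topology normedtype derive.
From mathcomp Require Import ring lra.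
Set Implicit Arguments. Unset Strict Implicit. Unset Printing Implicit Defensive.
Import Order.TTheory GRing.Theory Num.Theory.
Import numFieldNormedType.Exports.
Local Open Scope classical_set_scope.
Local Open Scope ring_scope.

Lemma a_of_gt0 (R : realType) (A tau Lc : R) :
  0 <= A -> 0 < tau -> 0 < Lc -> 0 < a_of A tau Lc.
Proof.
move=> A_ge0 tau_gt0 Lc_gt0.
by rewrite divr_gt0 ?ltr_wpDr ?sqrtr_ge0 ?mulr_gt0.
Qed.

(* a_of A tau Lc is the positive root of Lc a^2 - tau a - tau A. *)
Lemma a_of_sqr (R : realType) (A tau Lc : R) :
  0 <= A -> 0 < tau -> 0 < Lc ->
  Lc * a_of A tau Lc ^+ 2 = tau * (A + a_of A tau Lc).
Proof.
move=> A_ge0 tau_gt0 Lc_gt0; rewrite /a_of.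
have disc_ge0 : 0 <= tau ^+ 2 + 4 * tau * A * Lc.
  by rewrite addr_ge0 ?sqr_ge0 // !mulr_ge0 // ltW.
move: (sqr_sqrtr disc_ge0); set d := Num.sqrt _ => d_sqr.
apply/eqP; rewrite -subr_eq0.
have -> : Lc * ((tau + d) / (2 * Lc)) ^+ 2 - tau * (A + (tau + d) / (2 * Lc))
          = (d ^+ 2 - (tau ^+ 2 + 4 * tau * A * Lc)) / (4 * Lc).
  by field; rewrite gt_eqF.
by rewrite d_sqr subrr mul0r.
Qed.

Lemma fista_step_coord_ge0 (R : realFieldType) (A a tau L mu yp yn xp u xt s xn : R) :
  0 <= A -> 0 < a -> 0 < tau -> 0 <= mu ->
  L * a ^+ 2 = tau * (A + a) ->
  xt = (A + a)^-1 * (A * yp + a * xp) -> s = L * (xt - yn) ->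
  xn = (tau + a * mu / 2)^-1 * (mu * a / 2 * yn + tau * xp - a * s) ->
  0 <= A * (s * (yp - yn) + mu / 4 * (yp - yn) ^+ 2)
       + a * (s * (u - yn) + mu / 4 * (u - yn) ^+ 2)
       + tau / 2 * (xp - u) ^+ 2 - (tau + a * mu / 2) / 2 * (xn - u) ^+ 2
       - (A + a) * L / 2 * (yn - xt) ^+ 2.
Proof.
move=> A_ge0 a_gt0 tau_gt0 mu_ge0 a_sqr xt_def s_def xn_def.
have Aa_gt0 : 0 < A + a by rewrite ltr_wpDl.
have L_def : L = tau * (A + a) / a ^+ 2.
  by rewrite -a_sqr mulfK // expf_neq0 // gt_eqF.
suff -> : A * (s * (yp - yn) + mu / 4 * (yp - yn) ^+ 2)
       + a * (s * (u - yn) + mu / 4 * (u - yn) ^+ 2)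
       + tau / 2 * (xp - u) ^+ 2 - (tau + a * mu / 2) / 2 * (xn - u) ^+ 2
       - (A + a) * L / 2 * (yn - xt) ^+ 2
  = A * mu / 4 * (yp - yn) ^+ 2 + a * mu / 4 * (xn - yn) ^+ 2
    + tau / 2 * (xn - xp + a * s / tau) ^+ 2.
  by rewrite !addr_ge0 // mulr_ge0 ?sqr_ge0 // ?divr_ge0 ?mulr_ge0 // ltW.
rewrite xn_def s_def xt_def L_def; field.
have : 0 < tau * 2 + a * mu by rewrite ltr_wpDr ?mulr_ge0 ?mulr_gt0 // ltW.
by move=> ?; rewrite !gt_eqF.
Qed.

Section FistaStep.
Variables (R : realType) (n : nat).
Notation V := 'rV[R]_n.

Lemma fista_step_ge0 (A a tau L mu : R) (yp yn xp u xt s xn : V) :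
  0 <= A -> 0 < a -> 0 < tau -> 0 <= mu ->
  L * a ^+ 2 = tau * (A + a) ->
  xt = xt_of A a yp xp -> s = L *: (xt - yn) ->
  xn = (tau + a * mu / 2)^-1 *: (mu * a / 2 *: yn + tau *: xp - a *: s) ->
  0 <= A * (dot s (yp - yn) + mu / 4 * sqn (yp - yn))
       + a * (dot s (u - yn) + mu / 4 * sqn (u - yn))
       + tau / 2 * sqn (xp - u) - (tau + a * mu / 2) / 2 * sqn (xn - u)
       - (A + a) * L / 2 * sqn (yn - xt).
Proof.
move=> A_ge0 a_gt0 tau_gt0 mu_ge0 a_sqr xt_def s_def xn_def.
rewrite /sqn /dot !mulr_sumr -!big_split /= !mulr_sumr -!big_split -!sumrB.
apply: sumr_ge0 => k _; rewrite !mxE -!expr2.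
apply: (fista_step_coord_ge0 _ A_ge0 a_gt0 tau_gt0 mu_ge0 a_sqr).
- by rewrite xt_def !mxE.
- by rewrite s_def !mxE.
- by rewrite xn_def !mxE.
Qed.

Lemma gammaj_step_ge (f : V -> R) (g : V -> V) (h : V -> R) (chi A a tau L mu : R)
    (yp yn xp u xt s xn : V) :
  0 <= A -> 0 < a -> 0 < tau -> 0 <= mu ->
  L * a ^+ 2 = tau * (A + a) ->
  xt = xt_of A a yp xp -> s = L *: (xt - yn) ->
  xn = (tau + a * mu / 2)^-1 *: (mu * a / 2 *: yn + tau *: xp - a *: s) ->
  accepted f g chi xt L yn ->
  A * gammaj f g h mu yn xt s yp + a * gammaj f g h mu yn xt s u
    + tau / 2 * sqn (xp - u) - (tau + a * mu / 2) / 2 * sqn (xn - u)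
  >= (A + a) * (f yn + h yn) + chi * (A + a) * L / 2 * sqn (yn - xt).
Proof.
move=> A_ge0 a_gt0 tau_gt0 mu_ge0 a_sqr xt_def s_def xn_def.
rewrite /accepted /gammaj; set lin := linf f g yn xt; set d := sqn (yn - xt).
move=> acc; rewrite -subr_ge0.
have quad_ge0 := fista_step_ge0 u A_ge0 a_gt0 tau_gt0 mu_ge0 a_sqr xt_def s_def xn_def.
have acc_ge0 : 0 <= lin - f yn + (1 - chi) * L / 4 * d by lra.
have Aa_ge0 : 0 <= A + a by rewrite addr_ge0 // ltW.
move: quad_ge0; rewrite -/d.
set Q := (X in 0 <= X) => quad_ge0.
suff -> : A * (f yn + h yn + 2 * (lin - f yn) + dot s (yp - yn) + mu / 4 * sqn (yp - yn))
    + a * (f yn + h yn + 2 * (lin - f yn) + dot s (u - yn) + mu / 4 * sqn (u - yn))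
    + tau / 2 * sqn (xp - u) - (tau + a * mu / 2) / 2 * sqn (xn - u)
    - ((A + a) * (f yn + h yn) + chi * (A + a) * L / 2 * d)
  = 2 * (A + a) * (lin - f yn + (1 - chi) * L / 4 * d) + Q.
  by rewrite addr_ge0 // !mulr_ge0.
by rewrite /Q; field.
Qed.

End FistaStep.

Lemma cycle_coeffs_pos (R : realType) (A tau a L : nat -> R) (mu : R) (j : nat) :
  0 <= mu -> A 0%N = 0 -> tau 0%N = 1 -> 0 < L 0%N ->
  (forall i, (i < j)%N -> 0 < L i -> 0 < L i.+1) ->
  (forall i, (i < j)%N -> a i = a_of (A i) (tau i) (L i.+1)) ->
  (forall i, (i < j)%N -> A i.+1 = A i + a i /\ tau i.+1 = tau i + a i * mu / 2) ->
  forall i, (i <= j)%N -> [/\ 0 < L i, 0 <= A i & 0 < tau i].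
Proof.
move=> mu_ge0 A0 tau0 L0_gt0 L_step a_def A_tau_step.
elim=> [_ | i IH lt_ij]; first by rewrite A0 tau0.
have [Li_gt0 Ai_ge0 taui_gt0] := IH (ltnW lt_ij).
have L_gt0 := L_step i lt_ij Li_gt0.
have a_gt0 : 0 < a i by rewrite a_def // a_of_gt0.
have [-> ->] := A_tau_step i lt_ij.
by rewrite ltr_wpDr ?addr_ge0 ?divr_ge0 ?mulr_ge0 // ltW.
Qed.

Theorem lemmaA3
  (R : realType) (n : nat)
  (* problem data *)
  (f : 'rV[R]_n -> R) (gradf : 'rV[R]_n -> 'rV[R]_n) (Lbar : R)
  (h : 'rV[R]_n -> R) (H : set 'rV[R]_n) (mubar : R)
  (Hgrad : is_gradient f gradf)
  (Hfconv : convex_fun f)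
  (HLbar : 0 <= Lbar)
  (Hlip : forall z z' : 'rV[R]_n, enorm (gradf z' - gradf z) <= Lbar * enorm (z' - z))
  (Hh : proper_lsc_convex h H)
  (Hmubar : 0 < mubar)
  (Hphi : strongly_convex_ext (fun z => f z + h z) H mubar)
  (* method parameters and inputs *)
  (chi beta mu0 Mbar0 eps : R)
  (Hchi : 0 < chi < 1) (Hbeta : 1 < beta)
  (Hmu0 : 0 < mu0) (HMbar0 : 0 < Mbar0) (Heps : 0 < eps)
  (* the l-th cycle: mu = mu_{l-1}, started at z_{l-1} in H with L_0 = underline M_l *)
  (l : nat) (Hl : (0 < l)%N)
  (mu Mlow : R) (zprev : 'rV[R]_n)
  (Hmu : mu = mu0 / 2 ^+ l.-1)
  (HMlow : Mbar0 <= Mlow)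
  (Hz : H zprev)
  (* the sequences generated in the cycle *)
  (A tau a L : nat -> R) (x y xi xt s v : nat -> 'rV[R]_n)
  (HA0 : A 0%N = 0) (Htau0 : tau 0%N = 1) (HL0 : L 0%N = Mlow)
  (Hx0 : x 0%N = zprev) (Hy0 : y 0%N = zprev) (Hxi0 : xi 0%N = zprev)
  (* the iteration index j >= 1 *)
  (j : nat) (Hj : (0 < j)%N)
  (* steps (i)-(iii) of every iteration i+1 <= j *)
  (Hls : forall i : nat, (i < j)%N ->
     exists k : nat,
       [/\ L i.+1 = beta ^+ k * L i,
           (forall k' : nat, (k' < k)%N -> forall y' : 'rV[R]_n,
              let Lc := beta ^+ k' * L i in
              let ac := a_of (A i) (tau i) Lc in
              let xtc := xt_of (A i) ac (y i) (x i) in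
              is_prox f gradf h H xtc Lc y' -> ~ accepted f gradf chi xtc Lc y'),
           a i = a_of (A i) (tau i) (L i.+1) /\
           xt i = xt_of (A i) (a i) (y i) (x i),
           is_prox f gradf h H (xt i) (L i.+1) (y i.+1)
         & accepted f gradf chi (xt i) (L i.+1) (y i.+1)])
  (Hupd : forall i : nat, (i < j)%N ->
     [/\ xi i.+1 = (if f (y i.+1) + h (y i.+1) <= f (xi i) + h (xi i)
                    then y i.+1 else xi i),
         A i.+1 = A i + a i /\
         tau i.+1 = tau i + a i * mu / 2,
         s i.+1 = L i.+1 *: (xt i - y i.+1),
         x i.+1 = (tau i.+1)^-1 *: (mu * a i / 2 *: y i.+1 + tau i *: x i - a i *: s i.+1)
       & v i.+1 = gradf (y i.+1) - gradf (xt i) + s i.+1])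
  (* iterations 1, ..., j-1 neither restarted the cycle (iv) nor stopped (v) *)
  (Hcont : forall i : nat, (0 < i)%N -> (i < j)%N ->
     ~ (sqn (xi i - x 0%N) < chi * A i * L i * sqn (y i - xt i.-1))
     /\ ~ (enorm (v i) <= eps)) :
  forall u : 'rV[R]_n,
    A j.-1 * gammaj f gradf h mu (y j) (xt j.-1) (s j) (y j.-1)
    + a j.-1 * gammaj f gradf h mu (y j) (xt j.-1) (s j) u
    + tau j.-1 / 2 * sqn (x j.-1 - u) - tau j / 2 * sqn (x j - u)
    >= A j * (f (y j) + h (y j)) + chi * A j * L j / 2 * sqn (y j - xt j.-1).
Proof.
have mu_gt0 : 0 < mu by rewrite Hmu divr_gt0 // exprn_gt0.
have L_step i : (i < j)%N -> 0 < L i -> 0 < L i.+1.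
  move=> lt_ij Li_gt0; have [k [-> _ _ _ _]] := Hls i lt_ij.
  by rewrite mulr_gt0 // exprn_gt0 // (lt_trans ltr01 Hbeta).
have L0_gt0 : 0 < L 0%N by rewrite HL0 (lt_le_trans HMbar0 HMlow).
have a_def i : (i < j)%N -> a i = a_of (A i) (tau i) (L i.+1).
  by move=> lt_ij; have [_ [_ _ []]] := Hls i lt_ij.
have A_tau_step i :
    (i < j)%N -> A i.+1 = A i + a i /\ tau i.+1 = tau i + a i * mu / 2.
  by move=> lt_ij; have [] := Hupd i lt_ij.
have coeffs_pos :=
  cycle_coeffs_pos (ltW mu_gt0) HA0 Htau0 L0_gt0 L_step a_def A_tau_step.
move=> u; clear Hcont L_step a_def A_tau_step.
case: j Hj Hls Hupd coeffs_pos => // i _ Hls Hupd coeffs_pos /=.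
have [_ Ai_ge0 taui_gt0] := coeffs_pos i (leqnSn i).
have [L'_gt0 _ _] := coeffs_pos i.+1 (leqnn _).
have [_ [_ _ [a_def xt_def] _ acc]] := Hls i (ltnSn i).
have [_ [A_def tau_def] s_def x_def _] := Hupd i (ltnSn i).
rewrite tau_def in x_def; rewrite A_def tau_def.
apply: (gammaj_step_ge h u Ai_ge0 _ taui_gt0 (ltW mu_gt0) _ xt_def s_def x_def acc).
- by rewrite a_def a_of_gt0.
- by rewrite a_def a_of_sqr.
Qed.
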